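(* Let $k\in\mathbb{N}$ with $\gcd(k,6)=3$, let $h$ be an integer with $\gcd(h,k)=1$, and let $h'$ be an integer with $hh'\equiv-1\pmod{k}$ and $2\mid h'$. Then $$\frac{\omega_{2h,\frac{k}{3}}\,\omega_{2h,k}\,\omega_{h,k}}{\omega_{h,\frac{k}{3}}} =-\exp\!\left(- \frac{2\pi i}{36k} \left(-9k+9k^2+ h (-9+5k^2) - 2k^2h' \right)\right)$$ and $$\frac{\omega_{h,\frac{k}{3}}\,\omega_{2h,k}\,\omega_{h,k}}{\omega_{2h,\frac{k}{3}}^3} =-\exp\!\left(- \frac{2\pi i}{18k} \left(3k^2+ h (9+k^2) - k^2h' \right)\right).$$
   Context: For coprime integers $h$ and $K\ge1$, $\omega_{h,K}=\exp(\pi i\, s(h,K))$, where $s(h,K)=\sum_{r=1}^{K-1}\frac{r}{K}\left(\frac{hr}{K}-\lfloor \frac{hr}{K}\rfloor-\frac12\right)$ is the Dedekind sum (the multiplier of the Dedekind eta function). *)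

From Stdlib Require Import Reals ZArith List.
From Coquelicot Require Import Coquelicot.
Open Scope R_scope.

Definition expi (t : R) : Complex.C := (cos t, sin t).

Definition rfloor (x : R) : R := IZR (Int_part x).

Definition dedekind_s (h K : Z) : R :=
  fold_right Rplus 0
    (map (fun r : nat =>
            let x := IZR h * INR r / IZR K in
            (INR r / IZR K) * (x - rfloor x - 1/2))
         (seq 1 (Z.to_nat K - 1))).

Definition omega (h K : Z) : Complex.C := expi (PI * dedekind_s h K).

(* Write 12K s(x,K) as the integer [dedekind_num x K], built from the floor moment
   T(x,K) = sum_{r<K} r floor(xr/K).  With k = 3m, m odd, each identity of the theorem
   amounts to a certain integer combination of the numerators for (h,k), (2h,k), (h,m),
   (2h,m) and of the exponent polynomial being divisible by 72k.  Modulo 9k this follows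
   from Dedekind reciprocity 12hT(h,k) + 12kT(k,h) = (polynomial in h, k), proved by
   counting lattice points below the line y = hx/k and using that j |-> jk mod h permutes
   the nonzero residues mod h, together with hh' = -1 (mod k).  Modulo 8 it follows from
   a parity law for T(2x,K) + T(x,K), K odd, obtained by pairing r with K - r.  Since the
   numerators only depend on h mod K, it suffices to treat h > 0. *)

From Stdlib Require Import Reals ZArith List.
From Coquelicot Require Import Coquelicot.
From Stdlib Require Import Lia Lra Permutation Znumtheory.
Open Scope Z_scope.

Fixpoint sumZ (f : Z -> Z) (n : nat) : Z :=
  match n with
  | O => 0
  | S n => sumZ f n + f (Z.of_nat n)
  end.

Lemma sumZ_S f n : sumZ f (S n) = sumZ f n + f (Z.of_nat n).
Proof. reflexivity. Qed.

Lemma sumZ_ext f g n :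
  (forall i, 0 <= i < Z.of_nat n -> f i = g i) -> sumZ f n = sumZ g n.
Proof.
  induction n as [|n IH]; intros Hfg; [reflexivity|].
  rewrite !sumZ_S, IH by (intros; apply Hfg; lia).
  rewrite Hfg by lia. reflexivity.
Qed.

Lemma sumZ_add f g n : sumZ (fun i => f i + g i) n = sumZ f n + sumZ g n.
Proof. induction n as [|n IH]; cbn [sumZ]; lia. Qed.

Lemma sumZ_sub f g n : sumZ (fun i => f i - g i) n = sumZ f n - sumZ g n.
Proof. induction n as [|n IH]; cbn [sumZ]; lia. Qed.

Lemma sumZ_mul_l c f n : sumZ (fun i => c * f i) n = c * sumZ f n.
Proof. induction n as [|n IH]; cbn [sumZ]; lia. Qed.

Lemma sumZ_const c n : sumZ (fun _ => c) n = c * Z.of_nat n.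
Proof. induction n as [|n IH]; cbn [sumZ]; lia. Qed.

Lemma sumZ_split f n m :
  sumZ f (n + m) = sumZ f n + sumZ (fun i => f (Z.of_nat n + i)) m.
Proof.
  induction m as [|m IH]; [cbn [sumZ]; rewrite Nat.add_0_r; lia|].
  rewrite Nat.add_succ_r, !sumZ_S, IH, Nat2Z.inj_add. lia.
Qed.

Lemma sumZ_shift f n : sumZ f (S n) = f 0 + sumZ (fun i => f (i + 1)) n.
Proof.
  rewrite <- Nat.add_1_l, sumZ_split. cbn [sumZ].
  f_equal. apply sumZ_ext. intros i _. f_equal. lia.
Qed.

Lemma sumZ_rev f n : sumZ f n = sumZ (fun i => f (Z.of_nat n - 1 - i)) n.
Proof.
  induction n as [|n IH]; [reflexivity|].
  rewrite sumZ_S, sumZ_shift, IH, Z.add_comm.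
  f_equal; [|apply sumZ_ext; intros i _]; f_equal; lia.
Qed.

Lemma sumZ_even_odd f n :
  sumZ f (2 * n) = sumZ (fun r => f (2 * r)) n + sumZ (fun r => f (2 * r + 1)) n.
Proof.
  induction n as [|n IH]; [reflexivity|].
  replace (2 * S n)%nat with (S (S (2 * n))) by lia.
  rewrite !sumZ_S, IH.
  replace (Z.of_nat (S (2 * n))) with (2 * Z.of_nat n + 1) by lia.
  replace (Z.of_nat (2 * n)) with (2 * Z.of_nat n) by lia. lia.
Qed.

Lemma sumZ_swap (g : Z -> Z -> Z) n m :
  sumZ (fun i => sumZ (g i) m) n = sumZ (fun j => sumZ (fun i => g i j) n) m.
Proof.
  induction n as [|n IH].
  - cbn [sumZ]. rewrite sumZ_const. lia.
  - rewrite sumZ_S, IH, <- sumZ_add. apply sumZ_ext. reflexivity.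
Qed.

Lemma sumZ_congr d f g n :
  (forall i, 0 <= i < Z.of_nat n -> (d | f i - g i)) -> (d | sumZ f n - sumZ g n).
Proof.
  induction n as [|n IH]; intros Hfg; [apply Z.divide_0_r|].
  rewrite !sumZ_S.
  replace (sumZ f n + f (Z.of_nat n) - (sumZ g n + g (Z.of_nat n)))
    with ((sumZ f n - sumZ g n) + (f (Z.of_nat n) - g (Z.of_nat n))) by lia.
  apply Z.divide_add_r; [apply IH; intros; apply Hfg | apply Hfg]; lia.
Qed.

Lemma sumZ_fold f n :
  sumZ f n = fold_right Z.add 0 (map f (map Z.of_nat (seq 0 n))).
Proof.
  induction n as [|n IH]; [reflexivity|].
  assert (Hinit : forall l a, fold_right Z.add a l = fold_right Z.add 0 l + a).
  { induction l as [|x l IHl]; intros a; cbn; [|rewrite IHl]; lia. }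
  rewrite seq_S, !map_app, fold_right_app, sumZ_S, IH. cbn [map fold_right].
  rewrite (Hinit _ (f _ + 0)), Nat.add_0_l. lia.
Qed.

Lemma sumZ_perm (s f : Z -> Z) n :
  (forall i, 0 <= i < Z.of_nat n -> 0 <= s i < Z.of_nat n) ->
  (forall i j, 0 <= i < Z.of_nat n -> 0 <= j < Z.of_nat n -> s i = s j -> i = j) ->
  sumZ (fun i => f (s i)) n = sumZ f n.
Proof.
  intros Hrange Hinj.
  assert (Hin : forall i, In i (map Z.of_nat (seq 0 n)) <-> 0 <= i < Z.of_nat n).
  { intros i. rewrite in_map_iff. split.
    - intros [x [<- Hx]]. apply in_seq in Hx. lia.
    - intros Hi. exists (Z.to_nat i). rewrite in_seq. lia. }
  assert (Hfold : forall l l', Permutation l l' ->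
    fold_right Z.add 0 l = fold_right Z.add 0 l') by (induction 1; cbn; lia).
  rewrite !sumZ_fold, <- (map_map s f).
  apply Hfold, Permutation_map, NoDup_Permutation_bis.
  - apply NoDup_map_NoDup_ForallPairs.
    + intros x y Hx Hy. apply Hinj; apply Hin; assumption.
    + apply FinFun.Injective_map_NoDup; [intros x y; lia | apply seq_NoDup].
  - rewrite !length_map. lia.
  - intros x Hx. apply in_map_iff in Hx as [y [<- Hy]].
    apply Hin in Hy. apply Hin. auto.
Qed.

Lemma sumZ_id n : 2 * sumZ (fun i => i) n = Z.of_nat n * (Z.of_nat n - 1).
Proof. induction n as [|n IH]; cbn [sumZ]; lia. Qed.

Lemma sumZ_sq n :
  6 * sumZ (fun i => i * i) n = (Z.of_nat n - 1) * Z.of_nat n * (2 * Z.of_nat n - 1).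
Proof. induction n as [|n IH]; cbn [sumZ]; lia. Qed.

Lemma sumZ_indicator F n : 0 <= F <= Z.of_nat n ->
  sumZ (fun j => if j <? F then 1 else 0) n = F.
Proof.
  induction n as [|n IH]; intros HF; cbn [sumZ]; [lia|].
  destruct (Z.ltb_spec (Z.of_nat n) F).
  - rewrite (sumZ_ext _ (fun _ => 1)), sumZ_const; [lia|].
    intros j Hj. destruct (Z.ltb_spec j F); lia.
  - rewrite IH; lia.
Qed.

Lemma sumZ_tail n g : -1 <= g < Z.of_nat n ->
  2 * sumZ (fun r => if g <? r then r else 0) n
  = Z.of_nat n * (Z.of_nat n - 1) - g * (g + 1).
Proof.
  induction n as [|n IH]; intros Hg; cbn [sumZ]; [nia|].
  destruct (Z.ltb_spec g (Z.of_nat n)).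
  - rewrite Z.mul_add_distr_l, IH; lia.
  - replace g with (Z.of_nat n) in * by lia.
    rewrite (sumZ_ext _ (fun _ => 0)), sumZ_const; [lia|].
    intros r Hr. destruct (Z.ltb_spec (Z.of_nat n) r); lia.
Qed.

Lemma sumZ_seq1 f n :
  fold_right Z.add 0 (map (fun r : nat => f (Z.of_nat r)) (seq 1 n)) = sumZ f (S n) - f 0.
Proof. rewrite sumZ_fold, map_map. cbn. lia. Qed.

Lemma coprime_not_divide_mul h k j :
  Z.gcd h k = 1 -> 0 < j < h -> ~ (h | j * k).
Proof.
  intros Hhk Hj Hdiv. rewrite Z.mul_comm in Hdiv.
  apply Gauss in Hdiv; [|apply Zgcd_1_rel_prime; assumption].
  apply Z.divide_pos_le in Hdiv; lia.
Qed.

Lemma divide_sub_cancel d x y : (d | x) -> (d | x - y) -> (d | y).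
Proof.
  intros Hx Hxy. replace y with (x - (x - y)) by ring. apply Z.divide_sub_r; assumption.
Qed.

Lemma divide_mul_coprime a b u z :
  rel_prime a u -> rel_prime b a -> (a | u * z) -> (b | z) -> (a * b | z).
Proof.
  intros Hau Hba Hauz Hbz. apply Gauss in Hauz as [t ->]; [|assumption].
  rewrite Z.mul_comm in Hbz. apply Gauss in Hbz as [s ->]; [|assumption]. exists s. ring.
Qed.

Lemma rel_prime_mul_l a b c : rel_prime a c -> rel_prime b c -> rel_prime (a * b) c.
Proof. intros Ha Hb. apply rel_prime_sym, rel_prime_mult; apply rel_prime_sym; assumption. Qed.

Lemma rel_prime_odd_2 k : Z.Odd k -> rel_prime k 2.
Proof. intros [a ->]. apply bezout_rel_prime. exists 1 (- a). ring. Qed.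

Lemma gcd_double_odd K x : Z.Odd K -> Z.gcd x K = 1 -> Z.gcd (2 * x) K = 1.
Proof.
  intros HK Hx. apply Zgcd_1_rel_prime, rel_prime_sym, rel_prime_mult.
  - apply rel_prime_odd_2. assumption.
  - apply rel_prime_sym, Zgcd_1_rel_prime. assumption.
Qed.

(** * Dedekind reciprocity *)

Definition floor_moment (x K : Z) : Z :=
  sumZ (fun r => r * (x * r / K)) (Z.to_nat K).

Section Reciprocity.

Variables h k : Z.
Hypotheses (Hh : 0 < h) (Hk : 0 < k) (Hhk : Z.gcd h k = 1).

Let q j := (j + 1) * k / h.
Let rho j := ((j + 1) * k) mod h.

Lemma rho_spec j : rho j = (j + 1) * k - h * q j.
Proof. unfold rho, q. pose proof (Z.div_mod ((j + 1) * k) h). lia. Qed.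

Lemma rho_range j : 0 <= j < h - 1 -> 1 <= rho j <= h - 1.
Proof.
  intros Hj. unfold rho. pose proof (Z.mod_pos_bound ((j + 1) * k) h Hh).
  assert (((j + 1) * k) mod h <> 0); [|lia].
  intros H0. apply (coprime_not_divide_mul h k (j + 1)); [assumption|lia|].
  apply Z.mod_divide; [lia|assumption].
Qed.

Lemma quot_range j : 0 <= j < h - 1 -> 0 <= q j < k.
Proof. intros Hj. pose proof (rho_spec j). pose proof (rho_range j Hj). nia. Qed.

Lemma ltb_floor_quot j r : 0 <= j < h - 1 -> 0 <= r < k ->
  (j <? h * r / k) = (q j <? r).
Proof.
  intros Hj Hr. pose proof (rho_spec j). pose proof (rho_range j Hj).
  pose proof (Z.mul_div_le (h * r) k Hk). pose proof (Z.mul_succ_div_gt (h * r) k Hk).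
  destruct (Z.ltb_spec j (h * r / k)), (Z.ltb_spec (q j) r); nia.
Qed.

(* Counting lattice points: [floor (h r / k)] is the number of [j < h - 1] with [q j < r]. *)
Lemma floor_moment_swap :
  2 * floor_moment h k = sumZ (fun j => k * (k - 1) - q j * (q j + 1)) (Z.to_nat (h - 1)).
Proof.
  set (n := Z.to_nat (h - 1)).
  transitivity (2 * sumZ (fun r => sumZ (fun j => if q j <? r then r else 0) n) (Z.to_nat k)).
  - unfold floor_moment. f_equal. apply sumZ_ext. intros r Hr.
    assert (Hfl : 0 <= h * r / k <= Z.of_nat n).
    { pose proof (Z.mul_div_le (h * r) k Hk). split; [apply Z.div_pos|]; nia. }
    rewrite <- (sumZ_indicator _ _ Hfl) at 1. rewrite <- sumZ_mul_l.
    apply sumZ_ext. intros j Hj. rewrite ltb_floor_quot by lia.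
    destruct (q j <? r); lia.
  - rewrite sumZ_swap, <- sumZ_mul_l. apply sumZ_ext. intros j Hj.
    rewrite sumZ_tail; [|pose proof (quot_range j); lia]. lia.
Qed.

Lemma sumZ_rho f :
  sumZ (fun j => f (rho j)) (Z.to_nat (h - 1)) = sumZ (fun j => f (j + 1)) (Z.to_nat (h - 1)).
Proof.
  rewrite <- (sumZ_perm (fun j => rho j - 1) (fun i => f (i + 1))).
  - apply sumZ_ext. intros j _. f_equal. lia.
  - intros i Hi. pose proof (rho_range i). lia.
  - intros i j Hi Hj Hij.
    assert (Hdiv : (h | (i - j) * k)).
    { exists (q i - q j). pose proof (rho_spec i). pose proof (rho_spec j). lia. }
    rewrite Z.mul_comm in Hdiv. apply Gauss in Hdiv; [|apply Zgcd_1_rel_prime; assumption].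
    destruct Hdiv as [c Hc]. assert (c = 0) by nia. lia.
Qed.

Lemma floor_moment_quot : floor_moment k h = sumZ (fun j => (j + 1) * q j) (Z.to_nat (h - 1)).
Proof.
  unfold floor_moment. replace (Z.to_nat h) with (S (Z.to_nat (h - 1))) by lia.
  rewrite sumZ_shift. cbn. apply sumZ_ext. intros j _. unfold q. f_equal. f_equal. ring.
Qed.

Theorem floor_moment_reciprocity :
  12 * h * floor_moment h k + 12 * k * floor_moment k h
  = 6 * h * (h - 1) * k * (k - 1) - 3 * h * (h - 1) * (k - 1) + (k * k - 1) * (h - 1) * (2 * h - 1).
Proof.
  set (n := Z.to_nat (h - 1)).
  assert (Hn : Z.of_nat n = h - 1) by lia.
  set (Q := sumZ (fun j => (j + 1) * (j + 1)) n).
  set (P := sumZ (fun j => j + 1) n).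
  assert (HQ : 6 * Q = (h - 1) * h * (2 * h - 1)).
  { pose proof (sumZ_sq (S n)) as Hsq. rewrite sumZ_shift in Hsq. lia. }
  assert (HP : 2 * P = h * (h - 1)).
  { pose proof (sumZ_id (S n)) as Hid. rewrite sumZ_shift in Hid. lia. }
  assert (Hrho2 : sumZ (fun j => rho j * rho j) n = Q) by exact (sumZ_rho (fun x => x * x)).
  assert (Hrho1 : sumZ (fun j => rho j) n = P) by exact (sumZ_rho (fun x => x)).
  assert (Hsq : h * h * sumZ (fun j => q j * q j) n
    = k * k * Q - 2 * k * sumZ (fun j => (j + 1) * rho j) n + sumZ (fun j => rho j * rho j) n).
  { unfold Q. rewrite <- !sumZ_mul_l, <- sumZ_sub, <- sumZ_add. apply sumZ_ext. intros j _.
    rewrite rho_spec. ring. }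
  assert (Hmixed : sumZ (fun j => (j + 1) * rho j) n = k * Q - h * floor_moment k h).
  { rewrite floor_moment_quot. fold n. unfold Q.
    rewrite <- !sumZ_mul_l, <- sumZ_sub. apply sumZ_ext. intros j _.
    rewrite rho_spec. ring. }
  assert (Hlin : h * sumZ (fun j => q j) n = k * P - sumZ (fun j => rho j) n).
  { unfold P. rewrite <- !sumZ_mul_l, <- sumZ_sub. apply sumZ_ext. intros j _.
    rewrite rho_spec. ring. }
  assert (Hswap : 2 * floor_moment h k
                = (h - 1) * k * (k - 1) - sumZ (fun j => q j * q j) n - sumZ (fun j => q j) n).
  { rewrite floor_moment_swap. fold n.
    replace ((h - 1) * k * (k - 1)) with (k * (k - 1) * Z.of_nat n) by (rewrite Hn; ring).
    rewrite <- sumZ_const, <- !sumZ_sub. apply sumZ_ext. intros j _. ring. }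
  apply (Z.mul_cancel_l _ _ h); [lia|].
  rewrite Hmixed, Hrho2 in Hsq. rewrite Hrho1 in Hlin. nia.
Qed.

End Reciprocity.

(** * A parity law for floor moments *)

Section Parity.

Variables N y : Z.
Hypotheses (HN : 0 <= N) (HKy : Z.gcd (2 * N + 1) y = 1).

Let K := 2 * N + 1.
Let F t := y * t / K.
Let n := Z.to_nat N.

Lemma floor_reflect t : 1 <= t <= K - 1 -> F (K - t) = y - 1 - F t.
Proof.
  intros Ht. unfold F. symmetry. apply (Z.div_unique_pos _ _ _ (K - (y * t) mod K)).
  - assert ((y * t) mod K <> 0).
    { intros H0. apply (coprime_not_divide_mul K y t HKy); [lia|].
      rewrite Z.mul_comm. apply Z.mod_divide; [lia|assumption]. }
    pose proof (Z.mod_pos_bound (y * t) K). lia.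
  - pose proof (Z.div_mod (y * t) K). lia.
Qed.

Lemma floor_moment_pairs : floor_moment y K
  = sumZ (fun r => (K - (2 * r + 2)) * F (K - (2 * r + 2)) + (2 * r + 2) * F (2 * r + 2)) n.
Proof.
  unfold floor_moment. replace (Z.to_nat K) with (S (2 * n)) by lia.
  rewrite sumZ_shift, sumZ_even_odd, sumZ_rev, <- sumZ_add. cbv beta.
  rewrite Z.mul_0_l, Z.add_0_l. apply sumZ_ext. intros r Hr.
  replace (2 * (Z.of_nat n - 1 - r) + 1) with (K - (2 * r + 2)) by lia.
  replace (2 * r + 1 + 1) with (2 * r + 2) by lia. reflexivity.
Qed.

Lemma floor_moment_parity :
  (2 | floor_moment y K - ((y - 1) * N + sumZ (fun r => F (2 * r + 2)) n)).
Proof.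
  rewrite floor_moment_pairs.
  replace ((y - 1) * N + _) with (sumZ (fun r => (y - 1) + F (2 * r + 2)) n)
    by (unfold n; rewrite sumZ_add, sumZ_const, Z2Nat.id by lia; ring).
  apply sumZ_congr. intros r Hr. rewrite floor_reflect by (unfold n in Hr; lia).
  exists ((N - r - 1) * (y - 1 - F (2 * r + 2)) + r * F (2 * r + 2)).
  unfold K. ring.
Qed.

Lemma sumZ_floor_evens_parity :
  (2 | sumZ (fun r => F (2 * r + 2)) n
       - (sumZ (fun i => F (i + 1)) n
          + (y - 1) * sumZ (fun i => if Z.odd (i + 1) then 1 else 0) n)).
Proof.
  assert (Hevens : sumZ (fun r => F (2 * r + 2)) n
    = sumZ (fun i => if Z.odd (i + 1) then F (K - (i + 1)) else F (i + 1)) n).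
  { transitivity (sumZ (fun i => if Z.odd (i + 1) then 0 else F (i + 1)) (n + n)).
    - replace (n + n)%nat with (2 * n)%nat by lia.
      rewrite sumZ_even_odd.
      rewrite (sumZ_ext (fun r => if Z.odd (2 * r + 1) then 0 else F (2 * r + 1)) (fun _ => 0)).
      + rewrite sumZ_const, Z.mul_0_l, Z.add_0_l. apply sumZ_ext. intros r _.
        replace (2 * r + 1 + 1) with (2 * (r + 1)) by ring.
        rewrite Z.odd_even. f_equal. ring.
      + intros r _. rewrite Z.odd_odd. reflexivity.
    - rewrite sumZ_split.
      rewrite (sumZ_rev
        (fun i => if Z.odd (Z.of_nat n + i + 1) then 0 else F (Z.of_nat n + i + 1))).
      rewrite <- sumZ_add. apply sumZ_ext. intros i Hi.
      replace (Z.of_nat n + (Z.of_nat n - 1 - i) + 1) with (K - (i + 1)) by (unfold n in *; lia).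
      unfold K at 1. rewrite Z.odd_sub, Z.odd_odd.
      destruct (Z.odd (i + 1)); cbn; ring. }
  rewrite Hevens, <- sumZ_mul_l, <- !sumZ_add. apply sumZ_congr. intros i Hi.
  destruct (Z.odd (i + 1)).
  - rewrite floor_reflect by (unfold n in Hi; lia). exists (- F (i + 1)). ring.
  - exists 0. ring.
Qed.

End Parity.

Lemma sumZ_odd_count n :
  (4 | 2 * sumZ (fun i => if Z.odd (i + 1) then 1 else 0) n - Z.of_nat n * (Z.of_nat n + 1)).
Proof.
  induction n as [|n [w Hw]]; [exists 0; reflexivity|].
  rewrite sumZ_S, Nat2Z.inj_succ.
  destruct (Z.Even_or_Odd (Z.of_nat n)) as [[c Hc]|[c Hc]]; rewrite Hc in *.
  - rewrite Z.odd_odd. exists (w - c). lia.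
  - replace (2 * c + 1 + 1) with (2 * (c + 1)) by ring. rewrite Z.odd_even.
    exists (w - c - 1). lia.
Qed.

Theorem floor_moment_double_parity N x : 0 <= N -> Z.gcd (2 * N + 1) x = 1 ->
  (4 | 2 * (floor_moment (2 * x) (2 * N + 1) + floor_moment x (2 * N + 1))
       - N * (N + 1) - 2 * x * N).
Proof.
  intros HN Hx.
  assert (H2x : Z.gcd (2 * N + 1) (2 * x) = 1).
  { rewrite Z.gcd_comm. apply gcd_double_odd; [exists N; reflexivity|].
    rewrite Z.gcd_comm. assumption. }
  destruct (floor_moment_parity N x HN Hx) as [a Ha].
  destruct (floor_moment_parity N (2 * x) HN H2x) as [b Hb].
  destruct (sumZ_floor_evens_parity N (2 * x) H2x) as [d Hd].
  destruct (sumZ_odd_count (Z.to_nat N)) as [e He]. rewrite Z2Nat.id in He by lia.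
  rewrite (sumZ_ext (fun i => 2 * x * (i + 1) / (2 * N + 1))
                    (fun r => x * (2 * r + 2) / (2 * N + 1))) in Hd
    by (intros; f_equal; ring).
  exists ((x - 1) * N + sumZ (fun r => x * (2 * r + 2) / (2 * N + 1)) (Z.to_nat N)
          + a + b + d + (x - 1) * sumZ (fun i => if Z.odd (i + 1) then 1 else 0) (Z.to_nat N) + e).
  lia.
Qed.

(** * The congruences modulo 72k *)

Definition dedekind_num (x K : Z) : Z :=
  2 * x * (K - 1) * (2 * K - 1) - 3 * K * (K - 1) - 12 * floor_moment x K.

Lemma dedekind_num_periodic x K j : 0 < K -> dedekind_num (x + K * j) K = dedekind_num x K.
Proof.
  intros HK. unfold dedekind_num, floor_moment.
  rewrite (sumZ_ext _ (fun r => r * (x * r / K) + j * (r * r))).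
  - rewrite sumZ_add, sumZ_mul_l. pose proof (sumZ_sq (Z.to_nat K)) as Hsq.
    rewrite Z2Nat.id in Hsq by lia. nia.
  - intros r _. replace ((x + K * j) * r) with (x * r + (j * r) * K) by ring.
    rewrite Z.div_add by lia. ring.
Qed.

Lemma divide_72k k h z : Z.Odd k -> (3 | k) -> Z.gcd h k = 1 ->
  (9 * k | 2 * h * z) -> (8 | z) -> (72 * k | z).
Proof.
  intros Hodd H3k Hhk H9 H8.
  assert (Hk2 : rel_prime k 2) by (apply rel_prime_odd_2; assumption).
  assert (Hkh : rel_prime k h) by (apply rel_prime_sym, Zgcd_1_rel_prime; assumption).
  assert (H3h : rel_prime 3 h) by (apply (rel_prime_div _ _ _ Hkh); assumption).
  replace (72 * k) with (9 * k * 8) by ring.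
  apply (divide_mul_coprime _ _ (2 * h)); [| |assumption|assumption].
  - apply rel_prime_mul_l; apply rel_prime_mult; try assumption.
    + apply Zgcd_1_rel_prime. reflexivity.
    + change 9 with (3 * 3). apply rel_prime_mul_l; assumption.
  - apply rel_prime_mult; [apply Zgcd_1_rel_prime; reflexivity|].
    change 8 with (2 * (2 * 2)).
    apply rel_prime_sym, rel_prime_mult, rel_prime_mult; assumption.
Qed.

(* With k = 3m, [PI * phase_sum / (36k)] is the total phase of the corresponding quotient of
   omegas (12m * 9 = 12k * 3 = 36k), and that quotient equals the right-hand side of the
   theorem iff [phase_defect] is divisible by 72k. *)
Definition phase_sum1 (k m h : Z) : Z :=
  9 * dedekind_num (2 * h) m + 3 * dedekind_num (2 * h) k
  + 3 * dedekind_num h k - 9 * dedekind_num h m.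

Definition phase_sum2 (k m h : Z) : Z :=
  9 * dedekind_num h m + 3 * dedekind_num (2 * h) k
  + 3 * dedekind_num h k - 27 * dedekind_num (2 * h) m.

Definition phase_defect1 (k m h h' : Z) : Z :=
  phase_sum1 k m h + 2 * (-9 * k + 9 * k ^ 2 + h * (-9 + 5 * k ^ 2) - 2 * k ^ 2 * h') - 36 * k.

Definition phase_defect2 (k m h h' : Z) : Z :=
  phase_sum2 k m h + 4 * (3 * k ^ 2 + h * (9 + k ^ 2) - k ^ 2 * h') - 36 * k.

Lemma phase_sums_periodic k m h j : 0 < m -> k = 3 * m ->
  phase_sum1 k m (h + k * j) = phase_sum1 k m h /\ phase_sum2 k m (h + k * j) = phase_sum2 k m h.
Proof.
  intros Hm ->. unfold phase_sum1, phase_sum2.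
  replace (2 * (h + 3 * m * j)) with (2 * h + 3 * m * (2 * j)) by ring.
  rewrite !dedekind_num_periodic by lia.
  replace (h + 3 * m * j) with (h + m * (3 * j)) by ring.
  replace (2 * h + 3 * m * (2 * j)) with (2 * h + m * (6 * j)) by ring.
  rewrite !dedekind_num_periodic by lia. split; reflexivity.
Qed.

Section PhaseDefects.

Variables k m h h' : Z.
Hypotheses (Hm : 0 < m) (Hodd : Z.Odd m) (Hk : k = 3 * m).
Hypotheses (Hhk : Z.gcd h k = 1) (Hh' : (k | h * h' + 1)) (Hh'even : (2 | h')).

Lemma gcd_h_m : Z.gcd h m = 1.
Proof.
  apply Zgcd_1_rel_prime, rel_prime_sym, (rel_prime_div k).
  - apply rel_prime_sym, Zgcd_1_rel_prime. assumption.
  - exists 3. lia.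
Qed.

Lemma odd_k : Z.Odd k.
Proof. destruct Hodd as [a Ha]. exists (3 * a + 1). lia. Qed.

Lemma phase_defects_mod_9k : 0 < h ->
  (9 * k | 2 * h * phase_defect1 k m h h') /\ (9 * k | 2 * h * phase_defect2 k m h h').
Proof using Hm Hodd Hk Hhk Hh'.
  intros Hh. pose proof gcd_h_m as Hhm.
  pose proof (floor_moment_reciprocity h k Hh ltac:(lia) Hhk) as R1.
  pose proof (floor_moment_reciprocity (2 * h) k ltac:(lia) ltac:(lia)
                (gcd_double_odd k h odd_k Hhk)) as R2.
  pose proof (floor_moment_reciprocity h m Hh Hm Hhm) as R3.
  pose proof (floor_moment_reciprocity (2 * h) m ltac:(lia) Hm
                (gcd_double_odd m h Hodd Hhm)) as R4.
  destruct Hh' as [c Hc].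
  (* lia only scales hypotheses by constants, and hh' + 1 = ck enters with factor -8k^2. *)
  assert (HC : k * k * (h * h' + 1) = k * k * (c * k)) by (rewrite Hc; ring).
  unfold phase_defect1, phase_defect2, phase_sum1, phase_sum2, dedekind_num.
  rewrite !Z.pow_2_r. subst k.
  set (T1 := floor_moment (3 * m) h) in *. set (T2 := floor_moment (3 * m) (2 * h)) in *.
  set (T3 := floor_moment m h) in *. set (T4 := floor_moment m (2 * h)) in *.
  split.
  - exists (-20*h*h*m + 8*h*h + 36*h*m - 20*h - 8*c*m*m + 8*T1 + 4*T2 - 8*T3 + 4*T4). lia.
  - exists (-8*h*h*m - 4*h*h + 24*h*m - 8*h - 8*c*m*m + 8*T1 + 4*T2 + 8*T3 - 12*T4). lia.
Qed.

Lemma phase_defects_mod_8 : (8 | phase_defect1 k m h h') /\ (8 | phase_defect2 k m h h').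
Proof using Hm Hodd Hk Hhk Hh'even.
  pose proof gcd_h_m as Hhm.
  destruct Hodd as [a Ha]. destruct Hh'even as [b Hb].
  assert (Hkh : Z.gcd (2 * (3 * a + 1) + 1) h = 1).
  { replace (2 * (3 * a + 1) + 1) with k by lia. rewrite Z.gcd_comm. assumption. }
  assert (Hmh : Z.gcd (2 * a + 1) h = 1) by (rewrite <- Ha, Z.gcd_comm; assumption).
  destruct (floor_moment_double_parity (3 * a + 1) h ltac:(lia) Hkh) as [v1 P1].
  destruct (floor_moment_double_parity a h ltac:(lia) Hmh) as [v2 P2].
  replace (2 * (3 * a + 1) + 1) with (3 * (2 * a + 1)) in P1 by ring.
  unfold phase_defect1, phase_defect2, phase_sum1, phase_sum2, dedekind_num.
  rewrite !Z.pow_2_r, Hb, Hk, Ha. split.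
  - exists (225*h*a*a + 144*h*a + 27*h - 36*a*a*b - 27*a*a - 36*a*b - 54*a - 9*b - 18
            - 9*v1 - 27*v2 + 27 * floor_moment h (2 * a + 1)). lia.
  - exists (90*h*a*a + 90*h*a + 27*h - 36*a*a*b - 27*a*a - 36*a*b - 54*a - 9*b - 18
            - 9*v1 - 27*v2 + 54 * floor_moment (2 * h) (2 * a + 1)). lia.
Qed.

End PhaseDefects.

Lemma phase_defects_shift k m h h' j : 0 < m -> Z.Odd m -> k = 3 * m ->
  (72 * k | phase_defect1 k m (h + k * j) h' - phase_defect1 k m h h')
  /\ (72 * k | phase_defect2 k m (h + k * j) h' - phase_defect2 k m h h').
Proof.
  intros Hm Hodd Hk. unfold phase_defect1, phase_defect2.
  destruct (phase_sums_periodic k m h j Hm Hk) as [-> ->].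
  destruct Hodd as [a Ha]. rewrite !Z.pow_2_r. subst k m. split.
  - exists (j * (5 * a * a + 5 * a + 1)). lia.
  - exists (j * (2 * a * a + 2 * a + 1)). lia.
Qed.

Theorem phase_congruences k m h h' :
  0 < m -> Z.Odd m -> k = 3 * m -> Z.gcd h k = 1 -> (k | h * h' + 1) -> (2 | h') ->
  (72 * k | phase_defect1 k m h h') /\ (72 * k | phase_defect2 k m h h').
Proof.
  intros Hm Hodd Hk Hhk Hh' Hh'even.
  (* h + kj = (h mod k) + k is positive, and the shift does not change anything mod 72k. *)
  set (j := 1 - h / k).
  assert (Hpos : 0 < h + k * j).
  { unfold j. pose proof (Z.mod_pos_bound h k). pose proof (Z.div_mod h k). lia. }
  clearbody j.
  assert (Hh1k : Z.gcd (h + k * j) k = 1).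
  { rewrite Z.gcd_comm, (Z.mul_comm k j), Z.gcd_add_mult_diag_r, Z.gcd_comm. assumption. }
  assert (Hh1' : (k | (h + k * j) * h' + 1)).
  { destruct Hh' as [c Hc]. exists (c + j * h'). lia. }
  destruct (phase_defects_mod_9k k m (h + k * j) h' Hm Hodd Hk Hh1k Hh1' Hpos) as [A1 A2].
  destruct (phase_defects_mod_8 k m (h + k * j) h' Hm Hodd Hk Hh1k Hh'even) as [B1 B2].
  destruct (phase_defects_shift k m h h' j Hm Hodd Hk) as [S1 S2].
  assert (H3k : (3 | k)) by (exists m; lia).
  pose proof (odd_k k m Hodd Hk) as Hko.
  split.
  - apply (divide_sub_cancel _ (phase_defect1 k m (h + k * j) h'));
      [apply (divide_72k k (h + k * j))|]; assumption.
  - apply (divide_sub_cancel _ (phase_defect2 k m (h + k * j) h'));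
      [apply (divide_72k k (h + k * j))|]; assumption.
Qed.

Lemma third_of_gcd_6_eq_3 k : 0 <= k -> Z.gcd k 6 = 3 ->
  k = 3 * (k / 3) /\ 0 < k / 3 /\ Z.Odd (k / 3).
Proof.
  intros Hk Hg.
  assert (H3 : (3 | k)) by (rewrite <- Hg; apply Z.gcd_divide_l).
  destruct H3 as [t ->]. rewrite Z.div_mul by lia.
  destruct (Z.Even_or_Odd t) as [[s ->]|Hodd].
  - assert (H2 : (2 | Z.gcd (2 * s * 3) 6)).
    { apply Z.gcd_greatest; [exists (s * 3) | exists 3]; ring. }
    rewrite Hg in H2. destruct H2 as [r Hr]. lia.
  - destruct Hodd as [s Hs]. repeat split; [lia | lia | exists s; assumption].
Qed.

(** * From congruences to exponentials *)

Open Scope R_scope.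

Lemma Int_part_IZR_div a K : (0 < K)%Z -> Int_part (IZR a / IZR K) = (a / K)%Z.
Proof.
  intros HK. unfold Int_part.
  pose proof (Z.mul_div_le a K HK). pose proof (Z.mul_succ_div_gt a K HK).
  assert (HKr : 0 < IZR K) by (apply IZR_lt; assumption).
  rewrite <- (tech_up (IZR a / IZR K) (a / K + 1)); [ring| |].
  - rewrite plus_IZR. apply (Rmult_lt_reg_l (IZR K)); [assumption|].
    field_simplify; [|lra]. rewrite <- !mult_IZR, <- plus_IZR. apply IZR_lt. lia.
  - rewrite plus_IZR. apply (Rmult_le_reg_l (IZR K)); [assumption|].
    field_simplify; [|lra]. rewrite <- !mult_IZR, <- !plus_IZR. apply IZR_le. lia.
Qed.

Lemma fold_Rplus_IZR_div (g : nat -> Z) (c : R) l :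
  fold_right Rplus 0 (map (fun r => IZR (g r) / c) l) = IZR (fold_right Z.add 0%Z (map g l)) / c.
Proof. unfold Rdiv. induction l as [|r l IH]; cbn; [|rewrite IH, plus_IZR]; ring. Qed.

Lemma IZR_div_eq a b c d : b <> 0%Z -> d <> 0%Z -> (a * d = c * b)%Z ->
  IZR a / IZR b = IZR c / IZR d.
Proof.
  intros Hb Hd Hcross. apply not_0_IZR in Hb, Hd. apply (f_equal IZR) in Hcross.
  rewrite !mult_IZR in Hcross. field_simplify_eq; [lra | split; assumption].
Qed.

Lemma dedekind_s_num x K : (0 < K)%Z -> dedekind_s x K = IZR (dedekind_num x K) / IZR (12 * K).
Proof.
  intros HK. unfold dedekind_s.
  set (f := fun r => (2 * x * (r * r) - 2 * K * (r * (x * r / K)) - K * r)%Z).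
  assert (HKr : IZR K <> 0) by (apply not_0_IZR; lia).
  rewrite (map_ext _ (fun r : nat => IZR (f (Z.of_nat r)) / IZR (2 * K * K))).
  2:{ intros r. unfold rfloor. rewrite INR_IZR_INZ, <- mult_IZR, Int_part_IZR_div by assumption.
      unfold f. rewrite !minus_IZR, !mult_IZR. field. assumption. }
  rewrite fold_Rplus_IZR_div, sumZ_seq1.
  replace (S (Z.to_nat K - 1)) with (Z.to_nat K) by lia.
  assert (Hsum : (sumZ f (Z.to_nat K) - f 0
    = 2 * x * sumZ (fun r => r * r) (Z.to_nat K) - 2 * K * floor_moment x K
      - K * sumZ (fun r => r) (Z.to_nat K))%Z).
  { assert (Hf0 : f 0%Z = 0%Z) by (unfold f; rewrite !Z.mul_0_l, !Z.mul_0_r; ring).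
    unfold floor_moment. rewrite Hf0, Z.sub_0_r, <- !sumZ_mul_l, <- !sumZ_sub.
    apply sumZ_ext. intros. unfold f. ring. }
  rewrite Hsum. apply IZR_div_eq; [nia | lia |].
  pose proof (sumZ_sq (Z.to_nat K)). pose proof (sumZ_id (Z.to_nat K)).
  rewrite Z2Nat.id in * by lia. unfold dedekind_num. nia.
Qed.

Lemma expi_add a b : Cmult (expi a) (expi b) = expi (a + b).
Proof. unfold expi, Cmult. cbn. rewrite cos_plus, sin_plus. f_equal; ring. Qed.

Lemma expi_sub a b : Cdiv (expi a) (expi b) = expi (a - b).
Proof.
  unfold Cdiv. replace (Cinv (expi b)) with (expi (- b)); [rewrite expi_add; reflexivity|].
  unfold Cinv, expi. cbn. rewrite cos_neg, sin_neg.
  replace (cos b * (cos b * 1) + sin b * (sin b * 1)) with 1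
    by (pose proof (sin2_cos2 b); unfold Rsqr in *; nra).
  f_equal; field.
Qed.

Lemma expi_add_PI t : expi (t + PI) = Copp (expi t).
Proof. unfold Copp, expi. cbn. rewrite neg_cos, neg_sin. reflexivity. Qed.

Lemma expi_add_2PI_mul t n : expi (t + 2 * PI * IZR n) = expi t.
Proof.
  assert (Hnat : forall s (p : nat), expi (s + 2 * PI * INR p) = expi s).
  { intros s p. unfold expi.
    replace (s + 2 * PI * INR p) with (s + 2 * INR p * PI) by ring.
    rewrite cos_period, sin_period. reflexivity. }
  destruct (Z_le_gt_dec 0 n) as [Hn|Hn].
  - rewrite <- (Z2Nat.id n Hn), <- INR_IZR_INZ. apply Hnat.
  - rewrite <- (Hnat _ (Z.to_nat (- n))), INR_IZR_INZ, Z2Nat.id, opp_IZR by lia.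
    f_equal. ring.
Qed.

Lemma expi_half_turn (A B D : Z) x y : D <> 0%Z -> (2 * D | A + B - D)%Z ->
  x = PI * (IZR A / IZR D) -> y = - (PI * (IZR B / IZR D)) -> expi x = Copp (expi y).
Proof.
  intros HD [n Hn] -> ->.
  rewrite <- expi_add_PI, <- (expi_add_2PI_mul (_ + PI) n). f_equal.
  apply (f_equal IZR) in Hn. rewrite minus_IZR, !plus_IZR, !mult_IZR in Hn.
  apply not_0_IZR in HD.
  replace (IZR A) with (IZR n * (2 * IZR D) - IZR B + IZR D) by lra. field. assumption.
Qed.

Theorem lemma3p5 (k h h' : Z)
  (hk0 : (0 <= k)%Z) (hk6 : Z.gcd k 6 = 3%Z) (hhk : Z.gcd h k = 1%Z)
  (hh' : (k | h * h' + 1)%Z) (h'even : (2 | h')%Z) :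
  Cdiv (Cmult (Cmult (omega (2 * h) (k / 3)) (omega (2 * h) k)) (omega h k))
       (omega h (k / 3))
  = Copp (expi (- (2 * PI / (36 * IZR k)) *
       IZR (-9 * k + 9 * k ^ 2 + h * (-9 + 5 * k ^ 2) - 2 * k ^ 2 * h')))
  /\
  Cdiv (Cmult (Cmult (omega h (k / 3)) (omega (2 * h) k)) (omega h k))
       (Cmult (Cmult (omega (2 * h) (k / 3)) (omega (2 * h) (k / 3))) (omega (2 * h) (k / 3)))
  = Copp (expi (- (2 * PI / (18 * IZR k)) *
       IZR (3 * k ^ 2 + h * (9 + k ^ 2) - k ^ 2 * h'))).
Proof.
  destruct (third_of_gcd_6_eq_3 k hk0 hk6) as (Hk & Hm & Hodd).
  destruct (phase_congruences k (k / 3) h h' Hm Hodd Hk hhk hh' h'even) as [C1 C2].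
  assert (Hk3 : IZR k = 3 * IZR (k / 3)) by (rewrite Hk at 1; apply mult_IZR).
  assert (Hm0 : IZR (k / 3) <> 0) by (apply not_0_IZR; lia).
  unfold omega. rewrite !dedekind_s_num by lia. rewrite !expi_add, !expi_sub.
  (* A and B are found by unifying the divisibility goals with C1 and C2. *)
  split; eapply (expi_half_turn _ _ (36 * k)).
  - lia.
  - rewrite Z.mul_assoc. exact C1.
  - unfold phase_sum1. rewrite !mult_IZR, !minus_IZR, !plus_IZR, !mult_IZR, Hk3.
    field. assumption.
  - rewrite !mult_IZR, Hk3. field. assumption.
  - lia.
  - rewrite Z.mul_assoc. exact C2.
  - unfold phase_sum2. rewrite !mult_IZR, !minus_IZR, !plus_IZR, !mult_IZR, Hk3.
    field. assumption.
  - rewrite !mult_IZR, Hk3. field. assumption.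
Qed.
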